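(* Let $D$ be an upright long knot diagram (possibly with null vertices) and let $D'$ be obtained from $D$ by the null vertex move: an edge of $D$ with rotation number $\varphi$ is split, by inserting a new null vertex at a point where its tangent points upward, into two consecutive edges with rotation numbers $\varphi'$ and $\varphi''$, where $\varphi'+\varphi''=\varphi$ (or conversely, such a null vertex is removed). Then $\theta_0(D')=\theta_0(D)$.
   Context: An upright long knot diagram is a planar diagram of a long oriented knot such that at every crossing both strands point upward and the knot points upward at its beginning and end. It may contain null vertices (marked points on the knot, away from crossings, where the tangent points upward, whose only role is to cut edges). Edges are the arcs obtained by cutting the knot at all crossings (both strands) and null vertices; they carry distinct labels, $\ell^+$ denotes the label of the edge following $\ell$. Each edge $k$ has a rotation number $\varphi_k$: the signed number of points where its tangent is horizontal and heading right, cups $+1$, caps $-1$. A crossing is $c=(s,i,j)$: sign $s=\pm1$, incoming over-edge $i$, incoming under-edge $j$ (outgoing edges $i^+$, $j^+$); $X$ is the set of crossings. A null vertex with incoming edge $j$ and outgoing edge $k$ is recorded as $(j,k)$. Let $A=I+\sum_cA_c+\sum_{\mathrm{nv}}A_{\mathrm{nv}}$ where $A_c$ is zero except for entries $-T^s$ at $(i,i^+)$, $T^s-1$ at $(i,j^+)$, $-1$ at $(j,j^+)$, and $A_{\mathrm{nv}}$ is zero except for $-1$ at $(j,k)$. Let $G=(g_{\alpha\beta})=A^{-1}$ over $\mathbb{Q}(T)$. Let $T_3=T_1T_2$ and let $g_{\nu\alpha\beta}$ be $g_{\alpha\beta}$ with $T\to T_\nu$ ($\nu=1,2,3$). For crossings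 $c=(s,i,j)$, $c_0=(s_0,i_0,j_0)$, $c_1=(s_1,i_1,j_1)$ and an edge $k$: $$F_1(c)= s\Big[\tfrac12 - g_{3ii} + T_2^s g_{1ii}g_{2ji} - T_2^s g_{3jj}g_{2ji} - (T_2^s-1)g_{3ii}g_{2ji} + (T_3^s-1)g_{2ji}g_{3ji} - g_{1ii}g_{2jj} + 2g_{3ii}g_{2jj} + g_{1ii}g_{3jj} - g_{2ii}g_{3jj}\Big]$$ $$\quad + \frac{s}{T_2^s-1}\Big[(T_1^s-1)T_2^s\big(g_{3jj}g_{1ji}-g_{2jj}g_{1ji}+T_2^sg_{1ji}g_{2ji}\big) + (T_3^s-1)g_{3ji}\big(1-T_2^sg_{1ii}+g_{2ij}+(T_2^s-2)g_{2jj}-(T_1^s-1)(T_2^s+1)g_{1ji}\big)\Big],$$ $$F_2(c_0,c_1)=\frac{s_1(T_1^{s_0}-1)(T_3^{s_1}-1)g_{1j_1i_0}g_{3j_0i_1}}{T_2^{s_1}-1}\Big(T_2^{s_0}g_{2i_1i_0}+g_{2j_1j_0}-T_2^{s_0}g_{2j_1i_0}-g_{2i_1j_0}\Big),\qquad F_3(k)=(g_{3kk}-\tfrac12)\varphi_k,$$ and $\theta_0(D)=\sum_{c\in X}F_1(c)+\sum_{c_0,c_1\in X}F_2(c_0,c_1)+\sum_{\text{edges }k}F_3(k)$ (ordered pairs, including $c_0=c_1$; null vertices contribute no terms of their own). *)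

From HB Require Import structures.
From mathcomp Require Import all_boot all_order all_algebra.
From mathcomp Require Import fraction.
Set Implicit Arguments. Unset Strict Implicit. Unset Printing Implicit Defensive.
Import Order.TTheory GRing.Theory Num.Theory.
Local Open Scope ring_scope.

(* Edges are labelled 0, 1, ..., nE-1 in the order in which they are   *)
(* traversed along the knot, so that the edge following l is l.+1      *)
(* (l^+ = l+1).                                                        *)
(* A crossing (s,i,j): sign s (true = +1, false = -1), incoming        *)
(* over-edge i, incoming under-edge j; outgoing edges i.+1, j.+1.      *)
(* A null vertex is recorded by its incoming edge j (outgoing j.+1).   *)
Record crossing := Crossing { csign : bool; cover : nat; cunder : nat }.

Record diagram := Diagram {
  nE : nat;
  cross : seq crossing;
  nullv : seq nat;
  rotn : seq int
}.

(* Well-formedness: every cut point between consecutive edges l, l.+1  *)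
(* (l < nE-1) is exactly one of: the over-strand of a crossing, the     *)
(* under-strand of a crossing, or a null vertex.                        *)
Definition wf_diagram (D : diagram) : Prop :=
  [/\ (0 < nE D)%N, size (rotn D) = nE D &
      perm_eq (map cover (cross D) ++ map cunder (cross D) ++ nullv D)
              (iota 0 (nE D).-1)].

(* The null vertex move: a null vertex is inserted on edge k, which is   *)
(* split into the consecutive edges k (rotation number phi1) and k.+1    *)
(* (rotation number phi2); old edges m > k are relabelled m.+1.          *)
Definition shift_lbl (k m : nat) : nat := if (m < k)%N then m else m.+1.

Definition insert_nv (D : diagram) (k : nat) (phi1 phi2 : int) : diagram :=
  Diagram (nE D).+1
    [seq Crossing (csign c) (shift_lbl k (cover c)) (shift_lbl k (cunder c))
       | c <- cross D]
    (k :: map (shift_lbl k) (nullv D))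
    (take k (rotn D) ++ [:: phi1; phi2] ++ drop k.+1 (rotn D)).

Section Theta.
Variable K : fieldType.

Definition sgn (s : bool) : K := if s then 1 else -1.
Definition powS (t : K) (s : bool) : K := if s then t else t^-1.

Definition ind (b : bool) (x : K) : K := if b then x else 0.

Definition Aentry (D : diagram) (t : K) (a b : nat) : K :=
  ((a == b)%N)%:R
  + \sum_(c <- cross D)
      (ind ((a == cover c) && (b == (cover c).+1)) (- powS t (csign c))
       + ind ((a == cover c) && (b == (cunder c).+1)) (powS t (csign c) - 1)
       + ind ((a == cunder c) && (b == (cunder c).+1)) (-1))
  + \sum_(v <- nullv D) ind ((a == v) && (b == v.+1)) (-1).

Definition Amx (D : diagram) (t : K) : 'M[K]_(nE D) :=
  \matrix_(a, b) Aentry D t a b.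

Definition mget n (M : 'M[K]_n) (a b : nat) : K :=
  match insub a, insub b with
  | Some i, Some j => M i j
  | _, _ => 0
  end.

Definition Gent (D : diagram) (t : K) (a b : nat) : K :=
  mget (invmx (Amx D t)) a b.

Variables t1 t2 : K.
Let t3 := t1 * t2.
Let half : K := 2%:R^-1.

Definition F1 (D : diagram) (c : crossing) : K :=
  let g1 := Gent D t1 in let g2 := Gent D t2 in let g3 := Gent D t3 in
  let s := csign c in let i := cover c in let j := cunder c in
  let T1s := powS t1 s in let T2s := powS t2 s in let T3s := powS t3 s in
  sgn s * (half - g3 i i + T2s * g1 i i * g2 j i - T2s * g3 j j * g2 j i
           - (T2s - 1) * g3 i i * g2 j i + (T3s - 1) * g2 j i * g3 j i
           - g1 i i * g2 j j + 2%:R * g3 i i * g2 j j + g1 i i * g3 j j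
           - g2 i i * g3 j j)
  + sgn s / (T2s - 1) *
      ((T1s - 1) * T2s * (g3 j j * g1 j i - g2 j j * g1 j i
                          + T2s * g1 j i * g2 j i)
       + (T3s - 1) * g3 j i * (1 - T2s * g1 i i + g2 i j + (T2s - 2%:R) * g2 j j
                               - (T1s - 1) * (T2s + 1) * g1 j i)).

Definition F2 (D : diagram) (c0 c1 : crossing) : K :=
  let g1 := Gent D t1 in let g2 := Gent D t2 in let g3 := Gent D t3 in
  let s0 := csign c0 in let i0 := cover c0 in let j0 := cunder c0 in
  let s1 := csign c1 in let i1 := cover c1 in let j1 := cunder c1 in
  sgn s1 * (powS t1 s0 - 1) * (powS t3 s1 - 1) * g1 j1 i0 * g3 j0 i1
    / (powS t2 s1 - 1)
  * (powS t2 s0 * g2 i1 i0 + g2 j1 j0 - powS t2 s0 * g2 j1 i0 - g2 i1 j0).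

Definition F3 (D : diagram) (k : nat) : K :=
  (Gent D t3 k k - half) * (nth 0 (rotn D) k)%:~R.

Definition theta0_at (D : diagram) : K :=
  \sum_(c <- cross D) F1 D c
  + \sum_(c0 <- cross D) \sum_(c1 <- cross D) F2 D c0 c1
  + \sum_(k < nE D) F3 D k.

End Theta.

(* The field Q(T1, T2) = Frac(Q[T1][T2]); T1 is the inner variable,   *)
(* T2 the outer one.                                                   *)
Definition QT12 := {fraction {poly {poly rat}}}.
Definition T1 : QT12 := FracField.tofrac (('X : {poly rat})%:P).
Definition T2 : QT12 := FracField.tofrac ('X : {poly {poly rat}}).

Definition theta0 (D : diagram) : QT12 := theta0_at T1 T2 D.

From Pilot Require Import Defs.
From mathcomp Require Import all_boot all_order all_algebra fraction.
From mathcomp Require Import zify ring.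
Set Implicit Arguments. Unset Strict Implicit. Unset Printing Implicit Defensive.
Import Order.TTheory GRing.Theory Num.Theory.
Local Open Scope ring_scope.

(* Let A' be the matrix of the diagram with a null vertex inserted on edge k,
   and let u = unbump k be the relabelling that merges the two halves k, k+1
   of the split edge.  Row k of A' is e_k - e_(k+1), row k+1 carries the old
   row k, and the other rows are the old rows; from this one checks directly
   that A'^-1 (r, x) = G (u r, u x) - [r = k+1 /\ x = k], where G = A^-1.
   Hence G' agrees with G on old labels, so the crossing terms F1, F2 do not
   change, and G'(k,k) = G'(k+1,k+1) = G(k,k), so the edge terms of the two
   halves add up to (g_kk - 1/2)(phi' + phi'') = F3(k).
   The matrices A(T) are invertible at T = T1, T2, T1 T2 because det (T A(T))
   is a polynomial in T whose value at T = 1 is det A(1) = 1, A(1) being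
   upper unitriangular. *)

Section ScaledA.
Variable R : comNzRingType.

Definition sq_if (s : bool) (x : R) : R := if s then x ^+ 2 else 1.

(* [x * A(D, x)], with [x * x^s] written as [x ^+ 2] or [1] so that it is a
   polynomial expression in [x]. *)
Definition tAentry (D : diagram) (x : R) (a b : nat) : R :=
  x * (a == b)%:R
  + \sum_(c <- cross D)
      (((a == Defs.cover c) && (b == (Defs.cover c).+1))%:R * - sq_if (csign c) x
       + ((a == Defs.cover c) && (b == (cunder c).+1))%:R * (sq_if (csign c) x - x)
       + ((a == cunder c) && (b == (cunder c).+1))%:R * - x)
  + \sum_(v <- nullv D) ((a == v) && (b == v.+1))%:R * - x.

Lemma tAentry1_lower D a b : (b <= a)%N -> tAentry D 1 a b = (a == b)%:R.
Proof.
move=> ba; have above u : (a == u) && (b == u.+1) = false.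
  by apply/andP => -[/eqP au /eqP bu]; lia.
rewrite /tAentry mul1r big1 ?big1 ?addr0 // => [v _|c _]; first by rewrite above mul0r.
have -> : sq_if (csign c) 1 - 1 = 0 by rewrite /sq_if expr1n; case: ifP; rewrite subrr.
by rewrite !above !mul0r mulr0 !addr0.
Qed.

End ScaledA.

Lemma rmorph_tAentry (R S : comNzRingType) (f : {rmorphism R -> S}) D x a b :
  f (tAentry D x a b) = tAentry D (f x) a b.
Proof.
rewrite /tAentry /sq_if !rmorphD !rmorph_sum rmorphM rmorph_nat.
congr (_ + _ + _); apply: eq_bigr => i _;
  by rewrite ?rmorphD !rmorphM !rmorph_nat ?rmorphN ?rmorphB ?(fun_if f) ?rmorphXn ?rmorph1.
Qed.

Lemma indE (K : fieldType) b (x : K) : ind b x = b%:R * x.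
Proof. by case: b; rewrite ?mul1r ?mul0r. Qed.

Lemma tAentryE (K : fieldType) D (t : K) a b : t != 0 ->
  tAentry D t a b = t * Aentry D t a b.
Proof.
move=> t0; rewrite /tAentry /Aentry !mulrDr !mulr_sumr; congr (_ + _ + _).
  apply: eq_bigr => c _; rewrite !indE /sq_if /powS.
  by case: (csign c); [ring | field].
by apply: eq_bigr => v _; rewrite indE; ring.
Qed.

Definition tAmx_poly D : 'M[{poly rat}]_(nE D) := \matrix_(a, b) tAentry D 'X a b.

Lemma det_tAmx_poly_neq0 D : \det (tAmx_poly D) != 0.
Proof.
have eval1 : map_mx (horner_eval 1) (tAmx_poly D) = \matrix_(a, b) tAentry D 1 a b.
  by apply/matrixP => a b; rewrite !mxE rmorph_tAentry /= horner_evalE hornerX.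
have /eqP : (\det (tAmx_poly D)).[1] = 1.
  rewrite -horner_evalE -det_map_mx eval1 -det_tr det_trig.
    by apply: big1 => i _; rewrite !mxE tAentry1_lower ?eqxx.
  by apply/is_trig_mxP => i j ij; rewrite !mxE tAentry1_lower ?(ltnW ij) // gtn_eqF.
by apply: contraTneq => ->; rewrite horner0 eq_sym oner_eq0.
Qed.

Section Substitution.
Variables (u : {poly {poly rat}}) (w : {poly rat}).
Hypothesis u_at_w : u.[w] = 'X.

Let ratCC := (polyC \o polyC : rat -> {poly {poly rat}}).
Let ratCC_comm_u : commr_rmorph ratCC u := fun x => mulrC _ _.
Let subst_u := horner_morph ratCC_comm_u.

Lemma subst_u_eq0 q : (subst_u q == 0) = (q == 0).
Proof.
have subst_uK : horner_eval w (subst_u q) = q.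
  rewrite /subst_u /horner_morph -horner_map /= horner_evalE u_at_w -map_poly_comp.
  rewrite (eq_map_poly (g := polyC)) => [|c]; first exact: comp_polyXr.
  by rewrite /= horner_evalE hornerC.
apply/eqP/eqP => [q0|->]; last exact: rmorph0.
by rewrite -subst_uK q0 rmorph0.
Qed.

Lemma unitmx_Amx_tofrac D : Amx D (FracField.tofrac u) \in unitmx.
Proof.
set t := FracField.tofrac u.
have t_neq0 : t != 0.
  rewrite tofrac_eq0; apply/eqP => u0.
  by move/eqP: u_at_w; rewrite u0 horner0 eq_sym polyX_eq0.
have := det_tAmx_poly_neq0 D; rewrite -subst_u_eq0 -tofrac_eq0.
rewrite /subst_u -(det_map_mx (horner_morph ratCC_comm_u)) -det_map_mx -map_mx_comp.
have -> : map_mx (@FracField.tofrac _ \o horner_morph ratCC_comm_u) (tAmx_poly D)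
          = t *: Amx D t.
  apply/matrixP => a b; rewrite !mxE !rmorph_tAentry /= horner_morphX.
  exact: tAentryE.
by rewrite detZ unitmxE unitfE; apply: contra_neq => ->; rewrite mulr0.
Qed.

End Substitution.

Lemma unitmx_Amx_T1 D : Amx D T1 \in unitmx.
Proof. by apply: (@unitmx_Amx_tofrac _ 0); rewrite hornerC. Qed.

Lemma unitmx_Amx_T2 D : Amx D T2 \in unitmx.
Proof. by apply: (@unitmx_Amx_tofrac _ 'X); rewrite hornerX. Qed.

Lemma unitmx_Amx_T1T2 D : Amx D (T1 * T2) \in unitmx.
Proof.
rewrite /T1 /T2 -rmorphM; apply: (@unitmx_Amx_tofrac _ 1).
by rewrite hornerCM hornerX mulr1.
Qed.

Lemma sum_unbump_split (R : pzRingType) (f : nat -> R) (s : seq int) n k (p1 p2 : int) :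
  size s = n -> (k < n)%N -> p1 + p2 = nth 0 s k ->
  \sum_(r < n.+1)
     f (unbump k r) * (nth 0 (take k s ++ [:: p1; p2] ++ drop k.+1 s) r)%:~R
  = \sum_(b < n) f b * (nth 0 s b)%:~R.
Proof.
move=> <-; elim: s k f => // x s IH [|k] f /= hk.
  move=> <-; rewrite !big_ord_recl /= drop0 rmorphD mulrDr addrA.
  congr (_ + _ + _); apply: eq_bigr => i _; congr (f _ * _); rewrite /bump /unbump; lia.
move=> hp; rewrite big_ord_recl [RHS]big_ord_recl /=.
have bump0 i : bump 0 i = i.+1 by rewrite /bump; lia.
under eq_bigr do rewrite bump0 unbumpS /=.
by rewrite (IH _ (f \o succn)).
Qed.

Lemma shift_lblE k m : shift_lbl k m = bump k m.
Proof. by rewrite /shift_lbl /bump; case: ltnP => _; lia. Qed.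

Section Mget.
Variables (K : fieldType) (n : nat) (M : 'M[K]_n).

Lemma mget_ord (i j : 'I_n) : mget M i j = M i j.
Proof. by rewrite /mget !valK. Qed.

Lemma mget_out a b : ~~ ((a < n) && (b < n))%N -> mget M a b = 0.
Proof.
rewrite /mget negb_and; case/orP => out; first by rewrite insubN.
by case: insubP => // i _ _; rewrite insubN.
Qed.

End Mget.

Lemma sum_ord_delta (R : pzSemiRingType) n (F : nat -> R) j : (j < n)%N ->
  \sum_(i < n) (i == j :> nat)%:R * F i = F j.
Proof.
move=> hj; rewrite (bigD1 (Ordinal hj)) //= eqxx mul1r big1 ?addr0 // => i.
by rewrite -val_eqE /= => /negbTE ->; rewrite mul0r.
Qed.

Section AsubI.
Variable K : fieldType.

Definition AsubI (D : diagram) (t : K) (a b : nat) : K :=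
  \sum_(c <- cross D)
      (ind ((a == Defs.cover c) && (b == (Defs.cover c).+1)) (- powS t (csign c))
       + ind ((a == Defs.cover c) && (b == (cunder c).+1)) (powS t (csign c) - 1)
       + ind ((a == cunder c) && (b == (cunder c).+1)) (-1))
  + \sum_(v <- nullv D) ind ((a == v) && (b == v.+1)) (-1).

Lemma AentryE D t a b : Aentry D t a b = (a == b)%:R + AsubI D t a b.
Proof. by rewrite /Aentry /AsubI addrA. Qed.

Lemma AsubI_insert_nv D k p1 p2 t r c :
  AsubI (insert_nv D k p1 p2) t r c =
    if r == k then - (c == k.+1)%:R
    else if c == k.+1 then 0 else AsubI D t (unbump k r) (unbump k c).
Proof.
have k_bump x : (k == bump k x) = false by apply/negbTE/neq_bump.
rewrite /AsubI /insert_nv /= big_map big_cons big_map /ind /=.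
under eq_bigr do rewrite /= !shift_lblE.
under [in X in _ + X = _]eq_bigr do rewrite !shift_lblE.
have [->|rk] := eqVneq r k.
  rewrite !big1 => [|v _|e _]; rewrite ?k_bump ?addr0 //=.
  by case: (c == k.+1); rewrite ?oppr0 ?add0r.
have [->|ck] := eqVneq c k.+1.
  by rewrite !big1 => [|v _|e _]; rewrite ?eqSS ?k_bump ?andbF ?addr0.
have unbump_row x : (r == bump k x) = (unbump k r == x).
  by move: rk; rewrite /bump /unbump; lia.
have unbump_col x : (c == (bump k x).+1) = (unbump k c == x.+1).
  by move: ck; rewrite /bump /unbump; lia.
by rewrite add0r; congr (_ + _); apply: eq_bigr => e _; rewrite !unbump_row !unbump_col.
Qed.

End AsubI.

Section Inverse.
Variables (K : fieldType) (D : diagram) (k : nat) (p1 p2 : int) (t : K).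
Hypotheses (k_lt_n : (k < nE D)%N) (unit_A : Amx D t \in unitmx).
Local Notation D' := (insert_nv D k p1 p2).
Local Notation n := (nE D).

Lemma sum_Aentry_Gent a y : (a < n)%N -> (y < n)%N ->
  \sum_(b < n) Aentry D t a b * Gent D t b y = (a == y)%:R.
Proof.
move=> ha hy.
have := congr1 (fun M : 'M[K]_n => M (Ordinal ha) (Ordinal hy)) (mulmxV unit_A).
rewrite !mxE => <-; apply: eq_bigr => b _.
by rewrite !mxE -[y]/(nat_of_ord (Ordinal hy)) /Gent mget_ord.
Qed.

Definition Ginsert : 'M[K]_n.+1 :=
  \matrix_(r, x)
    (Gent D t (unbump k r) (unbump k x) - ((r == k.+1 :> nat) && (x == k :> nat))%:R).

Lemma mulmx_Amx_Ginsert : Amx D' t *m Ginsert = 1%:M.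
Proof.
have k1_lt : (k.+1 < n.+1)%N by [].
apply/matrixP => r x; rewrite !mxE.
under eq_bigr do rewrite !mxE.
(* Column k+1 of A' is the only one without a counterpart in A. *)
rewrite (bigD1_ord (Ordinal k1_lt)) //=.
have unbump_k1 : unbump k k.+1 = k by rewrite /unbump; lia.
have unbump_bumpS b : unbump k (bump k.+1 b) = b by rewrite /bump /unbump; lia.
have bumpS_neq b : (bump k.+1 b == k.+1) = false by apply/negbTE; rewrite eq_sym neq_bump.
rewrite eqxx unbump_k1 /=.
under eq_bigr do rewrite unbump_bumpS bumpS_neq subr0.
set y := unbump k x; have hy : (y < n)%N by have := ltn_ord x; rewrite /y /unbump; lia.
rewrite AentryE AsubI_insert_nv eqxx.
under eq_bigr do rewrite AentryE AsubI_insert_nv bumpS_neq unbump_bumpS.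
have [rk|rk] := eqVneq (r : nat) k.
  have k_bumpS b : (k == bump k.+1 b) = (b == k) by rewrite /bump; lia.
  under eq_bigr do rewrite rk k_bumpS oppr0 addr0.
  rewrite (sum_ord_delta (fun b => Gent D t b y)) // rk ltn_eqF // add0r.
  by rewrite -val_eqE /= rk eq_sym; ring.
have [rk1|rk1] := eqVneq (r : nat) k.+1.
  under eq_bigr do rewrite rk1 eq_sym bumpS_neq add0r unbump_k1.
  have -> : \sum_(b < n) AsubI D t k b * Gent D t b y = (k == y)%:R - Gent D t k y.
    rewrite -(sum_Aentry_Gent k_lt_n hy) -(sum_ord_delta (fun b => Gent D t b y) k_lt_n).
    by rewrite -sumrB; apply: eq_bigr => b _; rewrite AentryE eq_sym; ring.
  rewrite -val_eqE /= rk1.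
  have -> : (k == y) = (x == k :> nat) || (x == k.+1 :> nat) by rewrite /y /unbump; lia.
  by rewrite [k.+1 == _]eq_sym; case: eqP => xk; case: eqP => xk1 /=; try lia; ring.
have r_bumpS b : (r == bump k.+1 b :> nat) = (unbump k r == b).
  by move: rk rk1; rewrite /bump /unbump; lia.
under eq_bigr do rewrite r_bumpS -AentryE.
have hr : (r < n.+1)%N := ltn_ord r.
have ha : (unbump k r < n)%N by move: hr; rewrite /unbump; lia.
rewrite addr0 mul0r add0r sum_Aentry_Gent //.
suff -> : (unbump k r == y) = (r == x :> nat) by [].
by move: rk rk1; rewrite /y /unbump; lia.
Qed.

Lemma invmx_Amx_insert_nv : invmx (Amx D' t) = Ginsert.
Proof.
have [unit_A' _] := mulmx1_unit mulmx_Amx_Ginsert.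
by rewrite -[RHS]mul1mx -(mulVmx unit_A') -mulmxA mulmx_Amx_Ginsert mulmx1.
Qed.

Lemma Gent_insert_nv r x :
  Gent D' t r x = Gent D t (unbump k r) (unbump k x) - ((r == k.+1) && (x == k))%:R.
Proof.
have [/andP [hr hx]|out] := boolP ((r < n.+1) && (x < n.+1))%N.
  rewrite /Gent invmx_Amx_insert_nv -[r]/(Ordinal hr : nat) -[x]/(Ordinal hx : nat).
  by rewrite mget_ord mxE.
rewrite /Gent !mget_out //; last by move: out; rewrite /unbump; lia.
by rewrite (_ : (r == k.+1) && (x == k) = false) ?subr0 //; move: out; lia.
Qed.

Lemma Gent_insert_nv_shift a b :
  Gent D' t (shift_lbl k a) (shift_lbl k b) = Gent D t a b.
Proof.
rewrite Gent_insert_nv !shift_lblE !bumpK.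
by rewrite (_ : bump k b == k = false) ?andbF ?subr0 // eq_sym; apply/negbTE/neq_bump.
Qed.

Lemma Gent_insert_nv_diag r : Gent D' t r r = Gent D t (unbump k r) (unbump k r).
Proof. by rewrite Gent_insert_nv (_ : (r == k.+1) && (r == k) = false) ?subr0 //; lia. Qed.

End Inverse.

Theorem mainTheorem5 (D : diagram) (k : nat) (phi1 phi2 : int) :
  wf_diagram D -> (k < nE D)%N -> phi1 + phi2 = nth 0 (rotn D) k ->
  theta0 (insert_nv D k phi1 phi2) = theta0 D.
Proof.
move=> [_ size_rot _] k_lt_n sum_phi.
have G1 := Gent_insert_nv_shift phi1 phi2 k_lt_n (unitmx_Amx_T1 D).
have G2 := Gent_insert_nv_shift phi1 phi2 k_lt_n (unitmx_Amx_T2 D).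
have G3 := Gent_insert_nv_shift phi1 phi2 k_lt_n (unitmx_Amx_T1T2 D).
rewrite /theta0 /theta0_at; congr (_ + _ + _).
- by rewrite big_map; apply: eq_bigr => c _; rewrite /F1 /= !G1 !G2 !G3.
- rewrite big_map; apply: eq_bigr => c0 _; rewrite big_map; apply: eq_bigr => c1 _.
  by rewrite /F2 /= !G1 !G2 !G3.
set f := fun b => Gent D (T1 * T2) b b - 2%:R^-1.
rewrite /F3 -(sum_unbump_split f size_rot k_lt_n sum_phi); apply: eq_bigr => r _.
by rewrite (Gent_insert_nv_diag _ _ k_lt_n (unitmx_Amx_T1T2 D)).
Qed.
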